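(* Let $\mathbf V$ be an $n$-dimensional $\mathbb Q(v,t)$-vector space with basis $\mathbf v_1,\dots,\mathbf v_n$, and for $\mathbf r=(r_1,\dots,r_d)\in[1,n]^d$ write $\mathbf v_{\mathbf r}=\mathbf v_{r_1}\otimes\cdots\otimes\mathbf v_{r_d}$. The formula, for $1\le j\le d-1$, $$\mathbf v_{r_1\cdots r_d}T_j=\begin{cases}\mathbf v_{r_1\cdots r_{j-1}r_{j+1}r_j\cdots r_d}, & r_j<r_{j+1},\\ vt\,\mathbf v_{r_1\cdots r_d}, & r_j=r_{j+1},\\ (vt-v^{-1}t)\mathbf v_{r_1\cdots r_d}+t^2\mathbf v_{r_1\cdots r_{j-1}r_{j+1}r_j\cdots r_d}, & r_j>r_{j+1},\end{cases}$$ extended linearly, defines a right action of $H_d(v,t)$ on $\mathbf V^{\otimes d}$.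
   Context: The two-parameter Iwahori–Hecke algebra $H_d(v,t)$ is the unital associative $\mathbb Q(v,t)$-algebra generated by $T_1,\dots,T_{d-1}$ subject to $T_i^2=(vt-v^{-1}t)T_i+t^2$ ($1\le i\le d-1$), $T_jT_{j+1}T_j=T_{j+1}T_jT_{j+1}$ ($1\le j\le d-2$), $T_iT_j=T_jT_i$ ($|i-j|>1$). *)

From HB Require Import structures.
From mathcomp Require Import all_boot all_order all_algebra.
From mathcomp Require Import fraction perm.
Set Implicit Arguments. Unset Strict Implicit. Unset Printing Implicit Defensive.
Import GRing.Theory.
Local Open Scope ring_scope.

(* The field Q(v,t): fractions of Q[v][t] = {poly {poly rat}}. *)
Notation Qvt := {fraction {poly {poly rat}}}.
Definition hv : Qvt := tofrac (('X : {poly rat})%:P).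
Definition ht : Qvt := tofrac ('X : {poly {poly rat}}).

(* Multi-indices r = (r_1,...,r_d) in [1,n]^d, 0-indexed positions/values. *)
Notation Idx n d := {ffun 'I_d -> 'I_n}.
(* V^{(x)d}: coordinates w.r.t. the basis v_r, r in [1,n]^d. *)
Notation Ten n d := {ffun Idx n d -> Qvt^o}.

Definition tbasis n d (r : Idx n d) : Ten n d := [ffun s => (s == r)%:R].

Definition swapIdx n d (a b : 'I_d) (r : Idx n d) : Idx n d :=
  [ffun k => r (tperm a b k)].

(* v_r T_j, where positions a = j-1 and b = j (0-indexed) are adjacent *)
Definition Tbas n d (a b : 'I_d) (r : Idx n d) : Ten n d :=
  if (r a < r b)%N then tbasis (swapIdx a b r)
  else if r a == r b then (hv * ht) *: tbasis r
  else (hv * ht - hv^-1 * ht) *: tbasis r + ht ^+ 2 *: tbasis (swapIdx a b r).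

Definition actT n d (a b : 'I_d) (x : Ten n d) : Ten n d :=
  \sum_(r : Idx n d) x r *: Tbas a b r.

(* In coordinates, [x |-> x T_j] is [hecke_op]: it sends a function f of
   multi-indices to s |-> A f(s) + B f(s'), where s' swaps the entries j, j+1
   of s and the coefficients A = [diag_coef], B = [swap_coef] depend only on
   the relative order of s_j and s_j+1.  This is the Hecke R-matrix with
   eigenvalues lam = vt and mu = -v^-1 t, so lam + mu = vt - v^-1 t and
   -lam mu = t^2.  Freezing all other entries, the quadratic and braid
   relations become identities between functions of two, resp. three, values,
   which hold over any commutative ring by case analysis on the relative order
   of the values.  Operators on disjoint pairs of positions commute because
   the swaps commute and neither touches the entries the other one reads. *)

From mathcomp Require Import all_boot all_order all_algebra.
From mathcomp Require Import fraction perm.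
From mathcomp Require Import ring zify.
Set Implicit Arguments. Unset Strict Implicit. Unset Printing Implicit Defensive.
Import GRing.Theory.
Local Open Scope ring_scope.

Section HeckeCoefficients.
Variables (R : comNzRingType) (l m : R) (n : nat).

Definition diag_coef (p q : 'I_n) : R :=
  if (p < q)%N then 0 else if (q < p)%N then l + m else l.

Definition swap_coef (p q : 'I_n) : R :=
  if (q < p)%N then 1 else if (p < q)%N then - (l * m) else 0.

Lemma hecke_quadratic (p q : 'I_n) (y z : R) :
  diag_coef p q * (diag_coef p q * y + swap_coef p q * z)
    + swap_coef p q * (diag_coef q p * z + swap_coef q p * y)
  = (l + m) * (diag_coef p q * y + swap_coef p q * z) - l * m * y.
Proof. by rewrite /diag_coef /swap_coef; case: ltngtP => _; ring. Qed.

Definition hecke12 (f : 'I_n -> 'I_n -> 'I_n -> R) (p q r : 'I_n) : R :=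
  diag_coef p q * f p q r + swap_coef p q * f q p r.

Definition hecke23 (f : 'I_n -> 'I_n -> 'I_n -> R) (p q r : 'I_n) : R :=
  diag_coef q r * f p q r + swap_coef q r * f p r q.

Lemma hecke_braid (f : 'I_n -> 'I_n -> 'I_n -> R) (p q r : 'I_n) :
  hecke12 (hecke23 (hecke12 f)) p q r = hecke23 (hecke12 (hecke23 f)) p q r.
Proof.
rewrite /hecke12 /hecke23 /diag_coef /swap_coef.
by case: (ltngtP p q) => pq; case: (ltngtP q r) => qr; case: (ltngtP p r) => pr;
  try (exfalso; lia); rewrite ?(val_inj pq) ?(val_inj qr) ?ltnn; ring.
Qed.

End HeckeCoefficients.

Section SwapIdx.
Variables (n d : nat) (a b : 'I_d).

Lemma swapIdxK : involutive (@swapIdx n d a b).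
Proof. by move=> r; apply/ffunP => k; rewrite !ffunE tpermK. Qed.

Lemma swapIdxL (r : Idx n d) : swapIdx a b r a = r b.
Proof. by rewrite ffunE tpermL. Qed.

Lemma swapIdxR (r : Idx n d) : swapIdx a b r b = r a.
Proof. by rewrite ffunE tpermR. Qed.

Lemma swapIdxD (r : Idx n d) k : a != k -> b != k -> swapIdx a b r k = r k.
Proof. by move=> ak bk; rewrite ffunE tpermD. Qed.

End SwapIdx.

Section DisjointSwaps.
Variables (n d : nat) (a b c e : 'I_d).
Hypotheses (ac : a != c) (ae : a != e) (bc : b != c) (be : b != e).

Lemma tperm_disjointC k : tperm c e (tperm a b k) = tperm a b (tperm c e k).
Proof.
have [ca ea cb eb] : [/\ c != a, e != a, c != b & e != b] by rewrite !(eq_sym _ a) !(eq_sym _ b).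
case: (tpermP a b k) => [ka|kb|/eqP ak /eqP bk]; try subst k.
- by rewrite (tpermD ca ea) tpermL (tpermD cb eb).
- by rewrite (tpermD cb eb) tpermR (tpermD ca ea).
- by case: (tpermP c e k) => [kc|ke|_ _]; try subst k; rewrite tpermD // eq_sym.
Qed.

Lemma swapIdxC (r : Idx n d) : swapIdx a b (swapIdx c e r) = swapIdx c e (swapIdx a b r).
Proof. by apply/ffunP => k; rewrite !ffunE tperm_disjointC. Qed.

End DisjointSwaps.

Section SetIdx3.
Variables (n d : nat) (a b c : 'I_d).
Hypotheses (ab : a != b) (bc : b != c) (ac : a != c).

Definition setIdx3 (s : Idx n d) (p q r : 'I_n) : Idx n d :=
  [ffun k => if k == a then p else if k == b then q else if k == c then r else s k].

Lemma setIdx3_a s p q r : setIdx3 s p q r a = p.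
Proof. by rewrite ffunE eqxx. Qed.

Lemma setIdx3_b s p q r : setIdx3 s p q r b = q.
Proof. by rewrite ffunE eqxx eq_sym (negbTE ab). Qed.

Lemma setIdx3_c s p q r : setIdx3 s p q r c = r.
Proof. by rewrite ffunE eqxx ![c == _]eq_sym (negbTE ac) (negbTE bc). Qed.

Lemma setIdx3_id s : setIdx3 s (s a) (s b) (s c) = s.
Proof.
by apply/ffunP => k; rewrite ffunE; do 3?case: eqP => [->|_].
Qed.

Lemma swapIdx_setIdx3_ab s p q r : swapIdx a b (setIdx3 s p q r) = setIdx3 s q p r.
Proof.
apply/ffunP => k; rewrite !ffunE.
case: tpermP => [->|->|/eqP ka /eqP kb]; rewrite ?eqxx ?[b == a]eq_sym ?(negbTE ab) //.
by rewrite (negbTE ka) (negbTE kb).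
Qed.

Lemma swapIdx_setIdx3_bc s p q r : swapIdx b c (setIdx3 s p q r) = setIdx3 s p r q.
Proof.
apply/ffunP => k; rewrite !ffunE.
case: tpermP => [->|->|/eqP kb /eqP kc];
  rewrite ?eqxx ?[b == a]eq_sym ?[c == a]eq_sym ?[c == b]eq_sym ?(negbTE ab) ?(negbTE ac) ?(negbTE bc) //.
by rewrite (negbTE kb) (negbTE kc).
Qed.

End SetIdx3.

Section HeckeOperator.
Variables (R : comNzRingType) (l m : R) (n d : nat).

Definition hecke_op (a b : 'I_d) (f : Idx n d -> R) (s : Idx n d) : R :=
  diag_coef l m (s a) (s b) * f s + swap_coef l m (s a) (s b) * f (swapIdx a b s).

Lemma hecke_op_ext a b (f g : Idx n d -> R) : f =1 g -> hecke_op a b f =1 hecke_op a b g.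
Proof. by move=> fg s; rewrite /hecke_op !fg. Qed.

Lemma hecke_op_quadratic a b (f : Idx n d -> R) s :
  hecke_op a b (hecke_op a b f) s = (l + m) * hecke_op a b f s - l * m * f s.
Proof. by rewrite /hecke_op swapIdxK swapIdxL swapIdxR hecke_quadratic. Qed.

Lemma hecke_op_disjointC (a b c e : 'I_d) (f : Idx n d -> R) :
  a != c -> a != e -> b != c -> b != e ->
  hecke_op c e (hecke_op a b f) =1 hecke_op a b (hecke_op c e f).
Proof.
move=> ac ae bc be s; have [ca ea cb eb] : [/\ c != a, e != a, c != b & e != b].
  by rewrite !(eq_sym _ a) !(eq_sym _ b).
rewrite /hecke_op swapIdxC // (swapIdxD _ ca ea) (swapIdxD _ cb eb).
rewrite (swapIdxD _ ac bc) (swapIdxD _ ae be); ring.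
Qed.

Section Braid.
Variables (a b c : 'I_d).
Hypotheses (ab : a != b) (bc : b != c) (ac : a != c).
Variable s : Idx n d.
Local Notation set3 := (setIdx3 a b c s).

Lemma hecke_op_setIdx3_ab (f : Idx n d -> R) g :
  (forall p q r, f (set3 p q r) = g p q r) ->
  forall p q r, hecke_op a b f (set3 p q r) = hecke12 l m g p q r.
Proof.
move=> fg p q r.
by rewrite /hecke_op swapIdx_setIdx3_ab // !fg setIdx3_a setIdx3_b.
Qed.

Lemma hecke_op_setIdx3_bc (f : Idx n d -> R) g :
  (forall p q r, f (set3 p q r) = g p q r) ->
  forall p q r, hecke_op b c f (set3 p q r) = hecke23 l m g p q r.
Proof.
move=> fg p q r.
by rewrite /hecke_op swapIdx_setIdx3_bc // !fg setIdx3_b // setIdx3_c.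
Qed.

Lemma hecke_op_braid (f : Idx n d -> R) :
  hecke_op a b (hecke_op b c (hecke_op a b f)) s
  = hecke_op b c (hecke_op a b (hecke_op b c f)) s.
Proof.
have f_set3 : forall p q r, f (set3 p q r) = f (set3 p q r) by [].
(* Only the entries at a, b, c move: view everything as a function of them. *)
rewrite -(@setIdx3_id n d a b c s).
rewrite (hecke_op_setIdx3_ab (hecke_op_setIdx3_bc (hecke_op_setIdx3_ab f_set3))).
rewrite (hecke_op_setIdx3_bc (hecke_op_setIdx3_ab (hecke_op_setIdx3_bc f_set3))).
exact: hecke_braid.
Qed.

End Braid.

End HeckeOperator.

Local Notation lam := (hv * ht).
Local Notation mu := (- (hv^-1 * ht)).

Lemma hv_neq0 : hv != 0.
Proof. by rewrite tofrac_eq0 polyC_eq0 polyX_eq0. Qed.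

Lemma eigen_prod : - (lam * mu) = ht ^+ 2.
Proof. by rewrite mulrN opprK mulrACA mulfV ?hv_neq0 // mul1r. Qed.

Lemma Tbas_coef n d (a b : 'I_d) (r : Idx n d) :
  Tbas a b r = diag_coef lam mu (r a) (r b) *: tbasis r
               + swap_coef lam mu (r b) (r a) *: tbasis (swapIdx a b r).
Proof.
rewrite /Tbas /diag_coef /swap_coef -val_eqE eigen_prod.
by case: ltngtP => _; rewrite ?scale0r ?add0r ?scale1r ?addr0.
Qed.

Lemma coord_sum_tbasis n d (c : Idx n d -> Qvt) (s : Idx n d) :
  (\sum_r c r *: tbasis r) s = c s.
Proof.
rewrite sum_ffunE (bigD1 s) //= big1 => [|r /negbTE rs]; rewrite !ffunE.
  by rewrite eqxx addr0; apply: mulr1.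
by rewrite eq_sym rs; apply: mulr0.
Qed.

Lemma actT_expand n d (a b : 'I_d) (x : Ten n d) :
  actT a b x = \sum_(r : Idx n d) hecke_op lam mu a b x r *: tbasis r.
Proof.
rewrite /actT; under eq_bigr do rewrite Tbas_coef scalerDr !scalerA.
rewrite big_split /= [X in _ + X](reindex_inj (can_inj (@swapIdxK n d a b))) -big_split /=.
apply: eq_bigr => r _; rewrite swapIdxK swapIdxL swapIdxR -scalerDl.
by rewrite /hecke_op [x _ * _]mulrC [x _ * _]mulrC.
Qed.

Lemma actTE n d (a b : 'I_d) (x : Ten n d) : actT a b x =1 hecke_op lam mu a b x.
Proof. by move=> s; rewrite actT_expand coord_sum_tbasis. Qed.

Lemma actTE2 n d (a b c e : 'I_d) (x : Ten n d) :
  actT a b (actT c e x) =1 hecke_op lam mu a b (hecke_op lam mu c e x).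
Proof.
(* An unrestricted rewrite would try to unify distinct [actT] terms, which
   unfolds the finite-function encoding and does not finish in practice. *)
by move=> s; rewrite [LHS]actTE; apply: hecke_op_ext; apply: actTE.
Qed.

Lemma actTE3 n d (a b c e g h : 'I_d) (x : Ten n d) :
  actT a b (actT c e (actT g h x))
  =1 hecke_op lam mu a b (hecke_op lam mu c e (hecke_op lam mu g h x)).
Proof. by move=> s; rewrite [LHS]actTE; apply: hecke_op_ext; apply: actTE2. Qed.

Lemma actT_quadratic n d (a b : 'I_d) (x : Ten n d) :
  actT a b (actT a b x) = (hv * ht - hv^-1 * ht) *: actT a b x + ht ^+ 2 *: x.
Proof.
apply/ffunP => s; rewrite !ffunE [LHS]actTE2 hecke_op_quadratic [in RHS]actTE.
by congr (_ + _); rewrite -mulNr eigen_prod.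
Qed.

Theorem mainTheorem8 (n d : nat) :
  [/\ (forall (a b : 'I_d) (x : Ten n d), val b = (val a).+1 ->
         actT a b (actT a b x) = (hv * ht - hv^-1 * ht) *: actT a b x + ht ^+ 2 *: x),
      (forall (a b c : 'I_d) (x : Ten n d), val b = (val a).+1 -> val c = (val b).+1 ->
         actT a b (actT b c (actT a b x)) = actT b c (actT a b (actT b c x)))
    & (forall (a b c e : 'I_d) (x : Ten n d), val b = (val a).+1 -> val e = (val c).+1 ->
         ((val b < val c)%N || (val e < val a)%N) ->
         actT c e (actT a b x) = actT a b (actT c e x))].
Proof.
split.
- by move=> a b x _; apply: actT_quadratic.
- move=> a b c x ab bc; apply/ffunP => s; rewrite [LHS]actTE3 [RHS]actTE3.
  by apply: hecke_op_braid; apply/eqP => E; subst; lia.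
- move=> a b c e x ab ce sep; apply/ffunP => s; rewrite [LHS]actTE2 [RHS]actTE2.
  by apply: hecke_op_disjointC; apply/eqP => E; subst; lia.
Qed.
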